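(* Let $(S,\mathcal{Q})$ be a weight $-1$ odd Jacobi structure on $\Pi E^*$ (a Jacobi algebroid structure on $E\to M$). On $T^*(\Pi E^*\times\mathbb{R})$ with natural coordinates $(x^A,\eta_\alpha,t,p_A,\pi^\alpha,p)$, where $t$ is an even coordinate on $\mathbb{R}$ of weight $0$ and $p$ its conjugate momentum of weight $0$, define $$\bar S=e^{-t}\big(S-\mathcal{Q}\,p\big).$$ Then $\{\bar S,\bar S\}=0$ for the canonical Poisson bracket of $T^*(\Pi E^*\times\mathbb{R})$, so $\bar S$ is a Schouten structure of weight $-1$ on $\Pi E^*\times\mathbb{R}$.
   Context: Supermanifold conventions; $\tilde a$ is parity. On $T^*(\Pi E^* )$ natural coordinates $(x^A,\eta_\alpha,p_A,\pi^\alpha)$ with parities $\tilde A,\tilde\alpha+1,\tilde A,\tilde\alpha+1$ and weights $0,1,0,-1$. Canonical Poisson bracket on $T^*N$ with coordinates $(x^A,p_A)$: $\{F,G\}=(-1)^{\tilde A\tilde F+\tilde A}\frac{\partial F}{\partial p_A}\frac{\partial G}{\partial x^A}-(-1)^{\tilde A\tilde F}\frac{\partial F}{\partial x^A}\frac{\partial G}{\partial p_A}$. An odd Jacobi structure on $N$ is a pair $(S,\mathcal{Q})$ of odd functions on $T^*N$, $S$ quadratic and $\mathcal{Q}$ linear in momenta, with $\{\mathcal{Q},\mathcal{Q}\}=0$, $\{\mathcal{Q},S\}=0$, $\{S,S\}=-2\mathcal{Q}S$. A Schouten structure is an odd function $S$ on $T^*N$ quadratic in momenta with $\{S,S\}=0$.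 A Jacobi algebroid structure on $E$ is a weight $-1$ odd Jacobi structure on $\Pi E^*$; locally $S=(-1)^{\tilde\alpha}\pi^\alpha Q^A_\alpha p_A+\frac12(-1)^{\tilde\alpha+\tilde\beta}\pi^\alpha\pi^\beta Q^\gamma_{\beta\alpha}\eta_\gamma$, $\mathcal{Q}=\pi^\alpha Q_\alpha$. *)

(* Local-coordinate (superdomain) model of functions on
   T*(Pi E_dual x R). *)
From HB Require Import structures.
From mathcomp Require Import all_boot all_order all_algebra.
Set Implicit Arguments. Unset Strict Implicit. Unset Printing Implicit Defensive.
Import Order.TTheory GRing.Theory Num.Theory.
Local Open Scope ring_scope.

(* Coordinates on N := Pi E_dual : x^A (A : 'I_m) and eta_alpha (alpha : 'I_k). *)
Notation Nidx m k := ('I_m + 'I_k)%type.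
(* Coordinates on N x R : None is the extra even coordinate t. *)
Notation NRidx m k := (option (Nidx m k)).
(* Coordinates on T*(N x R): inl y = base coordinate y, inr y = its momentum
   (inr None = p, the momentum conjugate to t). *)
Notation TNR m k := (NRidx m k + NRidx m k)%type.

Section Defs.
Variables (m k : nat) (parM : 'I_m -> bool) (parE : 'I_k -> bool).

(* parities: x^A has parity ~A, eta_alpha has parity ~alpha + 1 *)
Definition parN (a : Nidx m k) : bool :=
  match a with inl A => parM A | inr al => ~~ parE al end.
Definition parNR (y : NRidx m k) : bool :=
  match y with None => false | Some a => parN a end.
Definition parT (i : TNR m k) : bool :=
  match i with inl y => parNR y | inr y => parNR y end.

(* weights: x^A, t : 0 ; eta : 1 ; p_A, p : 0 ; pi : -1 *)
Definition wNR (y : NRidx m k) : int :=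
  match y with Some (inr _) => 1 | _ => 0 end.
Definition wT (i : TNR m k) : int :=
  match i with inl y => wNR y | inr y => - wNR y end.
Definition momT (i : TNR m k) : int :=
  match i with inl _ => 0 | inr _ => 1 end.
End Defs.

Section Chart.
Variables (A : nzRingType) (I : finType) (par : I -> bool)
  (P : bool -> A -> Prop) (coord : I -> A) (d : I -> A -> A).

(* A is a superalgebra of functions on a superdomain with coordinates
   coord i (parity par i) and left partial derivatives d i.  P b f means
   "f is homogeneous of parity b". *)
Record superchart : Prop := {
  par_zero : forall b, P b 0;
  par_add : forall b f g, P b f -> P b g -> P b (f + g);
  par_opp : forall b f, P b f -> P b (- f);
  par_one : P false 1;
  par_mul : forall b c f g, P b f -> P c g -> P (addb b c) (f * g);
  par_decomp : forall f, exists f0 f1, [/\ P false f0, P true f1 & f = f0 + f1];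
  par_uniq : forall f, P false f -> P true f -> f = 0;
  scomm : forall b c f g, P b f -> P c g -> f * g = (-1) ^+ (b && c) * (g * f);
  odd_sq : forall f, P true f -> f * f = 0;
  coord_par : forall i, P (par i) (coord i);
  d_add : forall i f g, d i (f + g) = d i f + d i g;
  d_par : forall i b f, P b f -> P (addb b (par i)) (d i f);
  d_leib : forall i b f g, P b f ->
    d i (f * g) = d i f * g + (-1) ^+ (par i && b) * (f * d i g);
  d_coord : forall i j, d i (coord j) = (i == j)%:R;
  d_comm : forall i j f, d i (d j f) = (-1) ^+ (par i && par j) * d j (d i f)
}.

Definition euler (w : I -> int) (F : A) : A :=
  \sum_(i : I) (w i)%:~R * (coord i * d i F).
End Chart.

Definition cbr (A : nzRingType) (X : finType) (parX : X -> bool)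
  (dx dp : X -> A -> A) (bF : bool) (F G : A) : A :=
  \sum_(a : X) ((-1) ^+ (addb (parX a && bF) (parX a)) * (dp a F * dx a G)
                - (-1) ^+ (parX a && bF) * (dx a F * dp a G)).

Section Structures.
Variables (A : nzRingType) (m k : nat) (parM : 'I_m -> bool) (parE : 'I_k -> bool)
  (P : bool -> A -> Prop) (coord : TNR m k -> A) (d : TNR m k -> A -> A).

Definition brN := cbr (parN parM parE) (fun a => d (inl (Some a))) (fun a => d (inr (Some a))).
Definition brNR := cbr (parNR parM parE) (fun y => d (inl y)) (fun y => d (inr y)).

(* F is (the pull-back of) a function on T*(Pi E_dual): independent of t and p *)
Definition on_TN (F : A) : Prop := d (inl None) F = 0 /\ d (inr None) F = 0.

Definition is_exp_minus_t (et : A) : Prop :=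
  [/\ P false et, d (inl None) et = - et & forall i, i != inl None -> d i et = 0].

Definition jacobi_algebroid (S Q : A) : Prop :=
  [/\ on_TN S /\ on_TN Q, P true S /\ P true Q,
      euler coord d (momT (k:=k) (m:=m)) S = S *+ 2 /\ euler coord d (momT (k:=k) (m:=m)) Q = Q,
      euler coord d (wT (m:=m) (k:=k)) S = - S /\ euler coord d (wT (m:=m) (k:=k)) Q = - Q &
      [/\ brN true Q Q = 0, brN true Q S = 0 & brN true S S = - ((Q * S) *+ 2)]].

Definition schouten_wm1 (F : A) : Prop :=
  [/\ P true F, euler coord d (momT (k:=k) (m:=m)) F = F *+ 2,
      euler coord d (wT (m:=m) (k:=k)) F = - F & brNR true F F = 0].
End Structures.

From Pilot Require Import Defs.
From HB Require Import structures.
From mathcomp Require Import all_boot all_order all_algebra.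
Import GRing.Theory.
Set Implicit Arguments. Unset Strict Implicit. Unset Printing Implicit Defensive.
Local Open Scope ring_scope.

(* Write G := S - p Q (p is even, so p Q = Q p).  Parity and the two Euler
   identities (momentum degree 2, weight -1) follow because Euler fields are
   derivations for even left factors, e^{-t} is invariant under any Euler
   field not involving t, and p has momentum degree 1 and weight 0.
   For the bracket we split the canonical bracket on T*(Pi E^* x R) into the
   (t, p) term and the bracket along Pi E^*.  Along Pi E^* the factor e^{-t}
   and p behave as constants, so bilinearity, the symmetry of the bracket of
   odd functions and the Jacobi identities give {G,G}_N = -2 Q S, hence
   {Sbar,Sbar}_N = -2 e^{-2t} Q S; the (t, p) term contributes
   e^{-2t} (Q G - G Q) = 2 e^{-2t} Q S, and the two cancel. *)

Lemma sum_option (R : nmodType) (T : finType) (F : option T -> R) :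
  \sum_(y : option T) F y = F None + \sum_(a : T) F (Some a).
Proof.
rewrite (bigD1 None) //=; congr (_ + _).
rewrite (reindex_omap Some id) /=; last by case.
by apply: eq_bigl => a; rewrite eqxx.
Qed.

Section SuperchartCalculus.
Variables (A : nzRingType) (I : finType) (par : I -> bool)
  (P : bool -> A -> Prop) (coord : I -> A) (d : I -> A -> A).
Hypothesis C : superchart par P coord d.

(* Even elements are central (every element is a sum of homogeneous parts). *)
Lemma even_central e f : P false e -> e * f = f * e.
Proof.
move=> Pe; have [f0 [f1 [P0 P1 ->]]] := par_decomp C f.
by rewrite mulrDr mulrDl (scomm C Pe P0) (scomm C Pe P1) /= expr0 !mul1r.
Qed.

Lemma d_sub i f g : d i (f - g) = d i f - d i g.
Proof.
have d0 : d i 0 = 0.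
  by apply: (addrI (d i 0)); rewrite -(d_add C) !addr0.
have dN : d i (- g) = - d i g.
  by apply/eqP; rewrite -addr_eq0 -(d_add C) addNr d0.
by rewrite (d_add C) dN.
Qed.

Lemma d_mul_even i e f : P false e -> d i (e * f) = d i e * f + e * d i f.
Proof. by move=> Pe; rewrite (d_leib C i f Pe) andbF expr0 mul1r. Qed.

Lemma euler_sub w f g :
  euler coord d w (f - g) = euler coord d w f - euler coord d w g.
Proof. by rewrite /euler -sumrB; apply: eq_bigr => i _; rewrite d_sub !mulrBr. Qed.

Lemma euler_mul_even w e f : P false e ->
  euler coord d w (e * f) = euler coord d w e * f + e * euler coord d w f.
Proof.
move=> Pe; rewrite /euler mulr_suml mulr_sumr -big_split /=.
apply: eq_bigr => i _; rewrite d_mul_even // !mulrDr !mulrA.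
by rewrite -(mulrA e) (even_central _ Pe).
Qed.

Lemma euler_coord w j : euler coord d w (coord j) = (w j)%:~R * coord j.
Proof.
rewrite /euler (bigD1 j) //= big1 => [|i /negbTE ij]; last first.
  by rewrite (d_coord C) ij !mulr0.
by rewrite (d_coord C) eqxx mulr1 addr0.
Qed.

Lemma euler_eq0 w e : (forall i, w i = 0 \/ d i e = 0) -> euler coord d w e = 0.
Proof.
by move=> h; rewrite /euler big1 // => i _; case: (h i) => ->; rewrite ?mul0r ?mulr0.
Qed.

Section Bracket.
Variables (X : finType) (parX : X -> bool) (ix ip : X -> I).
Hypotheses (par_ix : forall a, par (ix a) = parX a)
  (par_ip : forall a, par (ip a) = parX a).
Local Notation br := (cbr parX (fun a => d (ix a)) (fun a => d (ip a))).

Lemma cbr_subl b F G H : br b (F - G) H = br b F H - br b G H.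
Proof.
rewrite /cbr -sumrB; apply: eq_bigr => a _.
by rewrite !d_sub !mulrBl !mulrBr !opprD !opprK addrACA.
Qed.

Lemma cbr_subr b F G H : br b F (G - H) = br b F G - br b F H.
Proof.
rewrite /cbr -sumrB; apply: eq_bigr => a _.
by rewrite !d_sub !mulrBr !opprD !opprK addrACA.
Qed.

Lemma cbr_scalel b c F G : P false c ->
  (forall a, d (ix a) c = 0 /\ d (ip a) c = 0) -> br b (c * F) G = c * br b F G.
Proof.
move=> Pc c0; rewrite /cbr mulr_sumr; apply: eq_bigr => a _; have [cx cp] := c0 a.
by rewrite !d_mul_even // cx cp !mul0r !add0r mulrBr !mulrA -!(even_central _ Pc).
Qed.

Lemma cbr_scaler b c F G : P false c ->
  (forall a, d (ix a) c = 0 /\ d (ip a) c = 0) -> br b F (c * G) = c * br b F G.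
Proof.
move=> Pc c0; rewrite /cbr mulr_sumr; apply: eq_bigr => a _; have [cx cp] := c0 a.
rewrite !d_mul_even // cx cp !mul0r !add0r mulrBr.
by congr (_ - _); rewrite !mulrA -[_ * c](even_central _ Pc) !mulrA.
Qed.

Lemma cbr_odd_sym F G : P true F -> P true G -> br true F G = br true G F.
Proof.
move=> PF PG; rewrite /cbr; apply: eq_bigr => a _.
have PpF := d_par C (ip a) PF; have PxG := d_par C (ix a) PG.
have PxF := d_par C (ix a) PF; have PpG := d_par C (ip a) PG.
rewrite par_ix in PxF PxG; rewrite par_ip in PpF PpG.
rewrite (scomm C PpF PxG) (scomm C PxF PpG).
by case: (parX a); rewrite /= ?expr0 ?expr1 ?mul1r ?mulN1r ?opprK // addrC.
Qed.
End Bracket.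
End SuperchartCalculus.

Section SymplectisationChart.
Variables (A : nzRingType) (m k : nat) (parM : 'I_m -> bool) (parE : 'I_k -> bool)
  (P : bool -> A -> Prop) (coord : TNR m k -> A) (d : TNR m k -> A -> A).
Hypothesis C : superchart (parT parM parE) P coord d.
Local Notation t := (inl None : TNR m k).
Local Notation pt := (inr None : TNR m k).
Local Notation p := (coord pt).
Local Notation brN := (brN parM parE d).

Lemma d_shift i S Q : d i (S - p * Q) = d i S - ((i == pt)%:R * Q + p * d i Q).
Proof. by rewrite (d_sub C) (d_mul_even C _ _ (coord_par C pt)) (d_coord C). Qed.

Lemma euler_shift w S Q : euler coord d w (S - p * Q) =
  euler coord d w S - p * ((w pt)%:~R * Q + euler coord d w Q).
Proof.
rewrite (euler_sub C) (euler_mul_even C _ _ (coord_par C pt)) (euler_coord C).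
by rewrite mulrDr mulrA mulrzl -mulrzr.
Qed.

Lemma euler_exp_scale et w F : is_exp_minus_t P d et -> w t = 0 ->
  euler coord d w (et * F) = et * euler coord d w F.
Proof.
move=> [Pet _ dN_et] w0.
rewrite (euler_mul_even C _ _ Pet) (euler_eq0 coord) ?mul0r ?add0r // => i.
by case: (eqVneq i t) => [->|/dN_et]; [left|right].
Qed.

Lemma brNR_split b F G :
  brNR parM parE d b F G = d pt F * d t G - d t F * d pt G + brN b F G.
Proof. by rewrite /brNR /cbr sum_option /= expr0 !mul1r. Qed.

Lemma p_N_const a : d (inl (Some a)) p = 0 /\ d (inr (Some a)) p = 0.
Proof. by rewrite !(d_coord C). Qed.

Lemma brN_odd_sym F G : P true F -> P true G -> brN true F G = brN true G F.
Proof.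
exact: (cbr_odd_sym C (ix := fun a => inl (Some a)) (ip := fun a => inr (Some a))).
Qed.

Lemma brN_exp_scale et b F G : is_exp_minus_t P d et ->
  brN b (et * F) (et * G) = et * (et * brN b F G).
Proof.
move=> [Pet _ dN_et].
have et_const a : d (inl (Some a)) et = 0 /\ d (inr (Some a)) et = 0.
  by rewrite !dN_et.
by rewrite /Defs.brN (cbr_scalel C) ?(cbr_scaler C).
Qed.

(* Along Pi E^*, {S - pQ, S - pQ} = {S,S} - 2p{Q,S} + p^2{Q,Q} = -2QS. *)
Lemma brN_shift S Q : jacobi_algebroid parM parE P coord d S Q ->
  brN true (S - p * Q) (S - p * Q) = - (Q * S *+ 2).
Proof.
move=> [_ [PS PQ] _ _ [bQQ bQS bSS]]; have Pp := coord_par C pt.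
rewrite /Defs.brN !(cbr_subl C) !(cbr_subr C) !(cbr_scalel C) ?(cbr_scaler C) //;
  try exact: p_N_const.
rewrite -/(Defs.brN parM parE d) (brN_odd_sym PS PQ) bSS bQS bQQ.
by rewrite !mulr0 !subr0.
Qed.

Lemma brNR_symplectised et S Q : is_exp_minus_t P d et ->
  jacobi_algebroid parM parE P coord d S Q ->
  brNR parM parE d true (et * (S - p * Q)) (et * (S - p * Q)) = 0.
Proof.
move=> Het JSQ; have [Pet dt_et dN_et] := Het.
have [[[tS pS] [tQ pQ]] [PS PQ] _ _ _] := JSQ; have Pp := coord_par C pt.
set G := S - p * Q.
have dtF : d t (et * G) = - (et * G).
  rewrite (d_mul_even C _ _ Pet) dt_et d_shift tS tQ /=.
  by rewrite !mul0r mulr0 addr0 subrr mulr0 addr0 mulNr.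
have dpF : d pt (et * G) = - (et * Q).
  rewrite (d_mul_even C _ _ Pet) dN_et // d_shift pS pQ eqxx /=.
  by rewrite mul0r mul1r mulr0 addr0 sub0r mulrN add0r.
have QG : Q * G = Q * S.
  by rewrite mulrBr mulrA -(even_central C Q Pp) -mulrA (odd_sq C PQ) mulr0 subr0.
have GQ : G * Q = - (Q * S).
  have PG : P true G.
    by apply: (par_add C PS); apply: (par_opp C); apply: (par_mul C Pp PQ).
  by rewrite (scomm C PG PQ) /= expr1 mulN1r QG.
have etM x y : et * x * (et * y) = et * (et * (x * y)).
  by rewrite mulrA -(mulrA et x et) -(even_central C x Pet) !mulrA.
rewrite brNR_split dtF dpF (brN_exp_scale _ _ _ Het) (brN_shift JSQ).
by rewrite !mulrNN !etM QG GQ !mulrN opprK !mulrnAr -mulr2n subrr.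
Qed.
End SymplectisationChart.

Theorem proposition4p1 (A : nzRingType) (m k : nat)
  (parM : 'I_m -> bool) (parE : 'I_k -> bool)
  (P : bool -> A -> Prop) (coord : TNR m k -> A) (d : TNR m k -> A -> A) :
  superchart (parT parM parE) P coord d ->
  forall et : A, is_exp_minus_t P d et ->
  forall S Q : A, jacobi_algebroid parM parE P coord d S Q ->
  schouten_wm1 parM parE P coord d (et * (S - Q * coord (inr None))).
Proof.
move=> C et Het S Q JSQ; have [Pet _ _] := Het.
have [_ [PS PQ] [mS mQ] [wS wQ] _] := JSQ; have Pp := coord_par C (inr None).
rewrite -(even_central C Q Pp); set G := S - _ * Q.
split.
- apply: (par_mul C Pet); apply: (par_add C PS); apply: (par_opp C).
  exact: (par_mul C Pp PQ).
- rewrite (euler_exp_scale C _ Het) // (euler_shift C) mS mQ -[_%:~R]/(1 : A) mul1r.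
  by rewrite -mulr2n mulrnAr -mulrnBl mulrnAr.
- rewrite (euler_exp_scale C _ Het) // (euler_shift C) wS wQ /= oppr0 mulr0z mul0r.
  by rewrite sub0r mulrN opprK -mulrN /G opprB addrC.
- exact: (brNR_symplectised C Het JSQ).
Qed.
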